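(* Let $\mu\in\mathbb{R}$, $\alpha>0$ and $y\in\mathbb{R}$ with $|y|\ge2|\mu|$. Then there is a unique $x_y\in\mathbb{R}$ with $x_y=\mu\log|x_y+iy|-\log\alpha$. Moreover, if $x>x_y$ then $x>\mu\log|x+iy|-\log\alpha$, and if $x<x_y$ then $x<\mu\log|x+iy|-\log\alpha$. *)

From Stdlib Require Import Reals.
Open Scope R_scope.

Definition cmod_xy (x y : R) : R := sqrt (x ^ 2 + y ^ 2).

From Stdlib Require Import Reals.
Open Scope R_scope.
From Stdlib Require Import Lra.
From Coquelicot Require Import Coquelicot.

(* The map x |-> x - mu log|x + iy| has derivative 1 - mu x / (x^2 + y^2), and
   since 2|x||y| <= x^2 + y^2 the hypothesis |y| >= 2|mu| keeps this derivative
   above 3/4.  A function whose derivative is bounded below by a positive constant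
   is an increasing bijection of R, so it takes the value -log alpha exactly once,
   lies above it to the right of that point and below it to the left. *)

Section DeriveBoundedBelow.

Variables (f f' : R -> R) (k : R).
Hypothesis k_pos : 0 < k.
Hypothesis f_derive : forall x, derivable_pt_lim f x (f' x).
Hypothesis f'_ge : forall x, k <= f' x.

Lemma derive_ge_expanding a b : a <= b -> k * (b - a) <= f b - f a.
Proof.
  intros [hab | ->]; [| lra].
  destruct (MVT_cor2 f f' a b hab) as [c [-> _]]; [intros c _; apply f_derive |].
  apply Rmult_le_compat_r; [lra | apply f'_ge].
Qed.

Lemma derive_ge_increasing a b : a < b -> f a < f b.
Proof.
  intros hab. assert (h := derive_ge_expanding a b (Rlt_le _ _ hab)). nra.
Qed.

Lemma derive_ge_continuity : continuity f.
Proof.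
  intros x. apply derivable_continuous_pt. exists (f' x). apply f_derive.
Qed.

Lemma derive_ge_surjective c : exists x, f x = c.
Proof.
  set (r := Rabs (f 0 - c) / k).
  assert (r_ge0 : 0 <= r) by (apply Rdiv_le_0_compat; [apply Rabs_pos | lra]).
  assert (r_scaled : k * r = Rabs (f 0 - c)) by (unfold r; field; lra).
  assert (left_below : f (- r) <= c).
  { assert (h := derive_ge_expanding (- r) 0 ltac:(lra)).
    pose proof (Rle_abs (f 0 - c)). lra. }
  assert (right_above : c <= f r).
  { assert (h := derive_ge_expanding 0 r r_ge0).
    pose proof (Rabs_maj2 (f 0 - c)). lra. }
  destruct (IVT_gen f (- r) r c derive_ge_continuity) as [x [_ fx]].
  - split; [apply (Rle_trans _ (f (- r))); [apply Rmin_l | lra]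
           | apply (Rle_trans _ (f r)); [lra | apply Rmax_r]].
  - now exists x.
Qed.

Lemma derive_ge_bijective c : exists! x, f x = c.
Proof.
  destruct (derive_ge_surjective c) as [x fx]. exists x. split; [exact fx |].
  intros z fz.
  destruct (Rtotal_order x z) as [h | [h | h]]; [| exact h |];
    apply derive_ge_increasing in h; lra.
Qed.

End DeriveBoundedBelow.

Lemma is_derive_ln_cmod_xy x y :
  0 < x ^ 2 + y ^ 2 -> is_derive (fun t => ln (cmod_xy t y)) x (x / (x ^ 2 + y ^ 2)).
Proof.
  intros hpos. unfold cmod_xy. auto_derive.
  - split; [lra |]. split; [apply sqrt_lt_R0; lra | exact I].
  - assert (hsqrt : sqrt (x * (x * 1) + y * (y * 1)) ^ 2 = x ^ 2 + y ^ 2)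
      by (rewrite pow2_sqrt; lra).
    assert (0 < sqrt (x * (x * 1) + y * (y * 1))) by (apply sqrt_lt_R0; lra).
    rewrite <- hsqrt. field. lra.
Qed.

Lemma Rabs_div_sum_sqr_le x y :
  y <> 0 -> Rabs (x / (x ^ 2 + y ^ 2)) <= / (2 * Rabs y).
Proof.
  intros y0.
  assert (hy : 0 < Rabs y) by (apply Rabs_pos_lt; exact y0).
  assert (hpos : 0 < x ^ 2 + y ^ 2) by (pose proof (pow2_gt_0 y y0); nra).
  assert (amgm : 2 * Rabs x * Rabs y <= x ^ 2 + y ^ 2).
  { rewrite <- (pow2_abs x), <- (pow2_abs y).
    pose proof (pow2_ge_0 (Rabs x - Rabs y)). nra. }
  unfold Rdiv.
  rewrite Rabs_mult, (Rabs_pos_eq (/ _)) by (apply Rlt_le, Rinv_0_lt_compat; lra).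
  apply (Rmult_le_reg_l (2 * Rabs y * (x ^ 2 + y ^ 2))); [nra |].
  field_simplify; [nra | lra | lra].
Qed.

Definition x_minus_mu_log (mu y x : R) : R := x - mu * ln (cmod_xy x y).

Section SmallMu.

Variables (mu y : R).
Hypothesis hy : Rabs y >= 2 * Rabs mu.

Lemma mu_eq0_of_y_eq0 : y = 0 -> mu = 0.
Proof.
  intros ->. rewrite Rabs_R0 in hy. pose proof (Rabs_pos mu). apply Rabs_eq_0. lra.
Qed.

Lemma derivable_pt_lim_x_minus_mu_log x :
  derivable_pt_lim (x_minus_mu_log mu y) x (1 - mu * (x / (x ^ 2 + y ^ 2))).
Proof.
  apply is_derive_Reals. unfold x_minus_mu_log.
  destruct (Req_dec y 0) as [y0 | y0].
  - rewrite (mu_eq0_of_y_eq0 y0), Rmult_0_l, Rminus_0_r.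
    apply (is_derive_ext (fun t : R => t)).
    + intros t. now rewrite Rmult_0_l, Rminus_0_r.
    + apply (is_derive_id (K := R_AbsRing)).
  - apply (is_derive_minus (fun t => t) (fun t => mu * ln (cmod_xy t y)));
      [apply (is_derive_id (K := R_AbsRing)) |].
    apply (is_derive_scal (fun t => ln (cmod_xy t y))), is_derive_ln_cmod_xy.
    pose proof (pow2_ge_0 x). pose proof (pow2_gt_0 y y0). lra.
Qed.

Lemma x_minus_mu_log_derive_ge x : 3 / 4 <= 1 - mu * (x / (x ^ 2 + y ^ 2)).
Proof.
  destruct (Req_dec y 0) as [y0 | y0]; [rewrite (mu_eq0_of_y_eq0 y0); lra |].
  assert (hy0 : 0 < Rabs y) by (apply Rabs_pos_lt; exact y0).
  assert (bound : Rabs mu * Rabs (x / (x ^ 2 + y ^ 2)) <= / 4).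
  { apply (Rle_trans _ (Rabs mu * / (2 * Rabs y))).
    - apply Rmult_le_compat_l; [apply Rabs_pos | now apply Rabs_div_sum_sqr_le].
    - apply (Rmult_le_reg_l (4 * Rabs y)); [lra |].
      field_simplify; lra. }
  rewrite <- Rabs_mult in bound. pose proof (Rle_abs (mu * (x / (x ^ 2 + y ^ 2)))).
  lra.
Qed.

End SmallMu.

Theorem lemma5p1 (mu alpha y : R) (halpha : 0 < alpha)
  (hy : Rabs y >= 2 * Rabs mu) :
  (exists! xy : R, xy = mu * ln (cmod_xy xy y) - ln alpha) /\
  (forall xy : R, xy = mu * ln (cmod_xy xy y) - ln alpha ->
    (forall x : R, x > xy -> x > mu * ln (cmod_xy x y) - ln alpha) /\
    (forall x : R, x < xy -> x < mu * ln (cmod_xy x y) - ln alpha)).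
Proof.
  pose proof (derivable_pt_lim_x_minus_mu_log mu y hy) as phi_derive.
  pose proof (x_minus_mu_log_derive_ge mu y hy) as phi'_ge.
  assert (k_pos : 0 < 3 / 4) by lra.
  assert (increasing := derive_ge_increasing _ _ _ k_pos phi_derive phi'_ge).
  assert (fixed_iff : forall x, x = mu * ln (cmod_xy x y) - ln alpha <->
                                x_minus_mu_log mu y x = - ln alpha)
    by (intros x; unfold x_minus_mu_log; lra).
  split.
  - destruct (derive_ge_bijective _ _ _ k_pos phi_derive phi'_ge (- ln alpha))
      as [xy [hxy uniq]].
    exists xy. split; [now apply fixed_iff |].
    intros z hz. now apply uniq, fixed_iff.
  - intros xy hxy%fixed_iff. unfold x_minus_mu_log in *.
    split; intros x hx; [specialize (increasing xy x hx) | specialize (increasing x xy hx)];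
      lra.
Qed.
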